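(* Let $\mathbb I=(0,1]\cap\mathbb Q$, canonically arranged as below. Then $\sigma(\mathbb I)=(\Phi(n))_{n\in\mathbb N}$, where $\Phi(n)=\sum_{i=1}^n\varphi(i)$ and $\varphi$ is Euler's totient function; moreover $\sigma(\mathbb I)\approx_\mathcal F\alpha^2$, and more precisely $$\tfrac{3}{10}\,\alpha^2<_\mathcal F\sigma(\mathbb I)<_\mathcal F\frac{\alpha^2-\alpha}{2}.$$
   Context: $\mathbb N=\{1,2,\dots\}$. Each $x\in\mathbb I$ is represented uniquely as the pair $(k,m)\in\mathbb N\times\mathbb N$ with $x=k/m$, $\gcd(k,m)=1$, $k\le m$. $\mathbb N\times\mathbb N$ is arranged with $n$-th component $\{(i,j):\max\{i,j\}=n\}$, and $\mathbb I$ inherits the arrangement, so its $n$-th component is $\mathbb I_n=\{(k,n): \gcd(k,n)=1,\ k\le n\}$. The size sequence is $\sigma(\mathbb I)=(\sigma_n(\mathbb I))_n$, $\sigma_n(\mathbb I)=|\mathbb I_1|+\dots+|\mathbb I_n|$. $\alpha=(n)_n$; operations on sequences are componentwise, rational constants are identified with constant sequences. $(a_n)<_\mathcal F(b_n)$ iff $a_n<b_n$ for all sufficiently large $n$; $(a_n)\ge_\mathcal F(b_n)$ analogously; $(a_n)\approx_\mathcal F(b_n)$ iff some $k\in\mathbb N$ has $k(a_n)\ge_\mathcal F(b_n)$ and some $k$ has $k(b_n)\ge_\mathcal F(a_n)$. *)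

From mathcomp Require Import all_boot all_order all_algebra.
Set Implicit Arguments. Unset Strict Implicit. Unset Printing Implicit Defensive.
Import Order.TTheory GRing.Theory Num.Theory.
Local Open Scope ring_scope.

(* Elements of I = (0,1] ∩ Q, represented as pairs (k,m) with x = k/m,
   k >= 1, gcd(k,m) = 1, k <= m. *)
Definition inI (p : nat * nat) : bool :=
  [&& (0 < p.1)%N, (p.1 <= p.2)%N & coprime p.1 p.2].

(* n-th component of N x N: {(i,j) : max i j = n}, with N = {1,2,...}. *)
Definition NN_comp (n : nat) : seq (nat * nat) :=
  [seq p <- [seq (i, j) | i <- iota 1 n, j <- iota 1 n] | maxn p.1 p.2 == n].

Definition I_comp (n : nat) : seq (nat * nat) := [seq p <- NN_comp n | inI p].

Definition sigmaI (n : nat) : nat := (\sum_(1 <= i < n.+1) size (I_comp i))%N.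

Definition Phi (n : nat) : nat := (\sum_(1 <= i < n.+1) totient i)%N.

Definition ltF (a b : nat -> rat) : Prop :=
  exists N : nat, forall n : nat, (N <= n)%N -> a n < b n.
Definition geF (a b : nat -> rat) : Prop :=
  exists N : nat, forall n : nat, (N <= n)%N -> b n <= a n.
Definition approxF (a b : nat -> rat) : Prop :=
  (exists k : nat, (0 < k)%N /\ geF (fun n => k%:R * a n) b) /\
  (exists k : nat, (0 < k)%N /\ geF (fun n => k%:R * b n) a).

Definition sigmaQ (n : nat) : rat := (sigmaI n)%:R.
Definition alpha (n : nat) : rat := n%:R.

From mathcomp Require Import all_boot all_order all_algebra.
From mathcomp Require Import ring lra zify.
Import Order.TTheory GRing.Theory Num.Theory.
Set Implicit Arguments. Unset Strict Implicit. Unset Printing Implicit Defensive.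

(* sigma_n(I) counts the pairs 1 <= k <= m <= n with gcd k m = 1, i.e. it is
   Phi n.  For the bounds, sieve by a finite set S of primes: the number f_S(n)
   of pairs k <= m <= n having no common divisor in S satisfies
   f_S(n) = f_(p::S)(n) + f_S(n %/ p) for a prime p not in S, since the pairs of
   multiples of p counted by f_S(n) are p times the pairs counted by
   f_S(n %/ p).  By induction on S, f_S(n) = c_S n^2 / 2 + O(3^|S| n) with
   c_S = prod_(p in S) (1 - 1/p^2).  Coprime pairs survive every sieve, and a
   pair surviving the sieve by the primes up to 200 without being coprime has a
   common prime divisor q > 200; there are at most
   sum_(q > 200) (n/q)(n/q + 1)/2 <= 0.0026 n^2 + O(n) such pairs.  As
   0.608 <= c_S <= 0.9, this yields 3/10 n^2 < Phi n < (n^2 - n)/2 for large n. *)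

Lemma totient_sum_coprime b : 0 < b -> totient b = \sum_(1 <= a < b.+1) coprime a b.
Proof.
move=> b_gt0; rewrite totient_count_coprime big_ltn // big_nat_recr //=.
rewrite /coprime gcdn0 gcdnn addnC; congr (_ + _).
by apply: eq_bigr => a _; rewrite gcdnC.
Qed.

Lemma size_I_comp m : 0 < m -> size (I_comp m) = totient m.
Proof.
move=> m_gt0; rewrite totient_sum_coprime // /I_comp /NN_comp.
rewrite size_filter count_filter -sum1_count big_mkcond big_allpairs.
rewrite /index_iota subn1; apply: eq_big_seq => k.
rewrite mem_iota add1n ltnS => /andP[k_gt0 k_le].
have -> : iota 1 m = index_iota 1 m.+1 by rewrite /index_iota subn1.
rewrite big_nat_recr //= big1_seq => [|j].
  by rewrite /inI /= (maxn_idPr k_le) eqxx k_gt0 k_le /=; case: coprime.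
move=> /andP[_]; rewrite mem_index_iota => /andP[_ j_lt].
rewrite /inI /=; case: ifP => // /andP[/and3P[_ kj _]]; rewrite (maxn_idPr kj); lia.
Qed.

Definition count_pairs n (P : nat -> nat -> bool) : nat :=
  \sum_(1 <= b < n.+1) \sum_(1 <= a < b.+1) P a b.

Lemma eq_count_pairs n (P Q : nat -> nat -> bool) :
  (forall a b, P a b = Q a b) -> count_pairs n P = count_pairs n Q.
Proof. by move=> PQ; apply: eq_bigr => b _; apply: eq_bigr => a _; rewrite PQ. Qed.

Lemma sigmaI_Phi n : sigmaI n = Phi n.
Proof. by apply: eq_big_nat => i /andP[i_gt0 _]; rewrite size_I_comp. Qed.

Lemma Phi_count_coprime n : Phi n = count_pairs n coprime.
Proof. by apply: eq_big_nat => b /andP[b_gt0 _]; rewrite totient_sum_coprime. Qed.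

Definition divides_both q a b := (q %| a) && (q %| b).

Lemma sum_multiples p n (F : nat -> nat) : 0 < p ->
  \sum_(1 <= b < n.+1) (p %| b) * F b = \sum_(1 <= b < (n %/ p).+1) F (p * b).
Proof.
move=> p_gt0; elim: n => [|n IHn]; first by rewrite div0n !big_geq.
rewrite big_nat_recr // IHn (divnS _ p_gt0).
case: (boolP (p %| n.+1)) => [p_dvd|_] /=; last by rewrite addn0.
rewrite mul1n add1n [RHS]big_nat_recr //=; congr (_ + F _).
by rewrite -(divnK p_dvd) mulnC divnS // p_dvd.
Qed.

Lemma count_pairs_multiples p n (Q : nat -> nat -> bool) : 0 < p ->
  count_pairs n (fun a b => divides_both p a b && Q a b) =
  count_pairs (n %/ p) (fun a b => Q (p * a) (p * b)).
Proof.
move=> p_gt0; rewrite /count_pairs.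
have factor_b b : \sum_(1 <= a < b.+1) (divides_both p a b && Q a b) =
                  (p %| b) * \sum_(1 <= a < b.+1) (p %| a) * Q a b.
  rewrite big_distrr; apply: eq_bigr => a _ /=; rewrite /divides_both.
  by case: (p %| a); case: (p %| b); case: (Q a b).
rewrite (eq_bigr _ (fun b _ => factor_b b)) sum_multiples //.
by apply: eq_bigr => b _; rewrite sum_multiples // mulKn.
Qed.

Definition sieved (S : seq nat) a b := all (fun q => ~~ divides_both q a b) S.

Definition sieve_count S n := count_pairs n (sieved S).

Lemma sieve_count_cons p S n : prime p -> all prime S -> p \notin S ->
  sieve_count S n = sieve_count (p :: S) n + sieve_count S (n %/ p).
Proof.
move=> p_pr S_pr pNS.
have sievedM a b : sieved S (p * a) (p * b) = sieved S a b.
  apply: eq_in_all => q qS; have q_pr := allP S_pr q qS.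
  have q_p : coprime q p.
    by rewrite prime_coprime // dvdn_prime2 //; apply: contraNneq pNS => <-.
  by rewrite /divides_both !Gauss_dvdr.
have -> : sieve_count S (n %/ p) =
          count_pairs n (fun a b => divides_both p a b && sieved S a b).
  by rewrite count_pairs_multiples ?prime_gt0 //; apply: eq_count_pairs.
rewrite /sieve_count /count_pairs -big_split; apply: eq_bigr => b _.
rewrite -big_split; apply: eq_bigr => a _ /=.
by rewrite /sieved /divides_both /=; do 2!case: (_ %| _); case: all.
Qed.

Lemma sieved_coprime S a b : all prime S -> coprime a b -> sieved S a b.
Proof.
move=> S_pr co_ab; apply/allP => q qS; apply/negP => /andP[qa qb].
have : q %| gcdn a b by rewrite dvdn_gcd qa qb.
rewrite (eqP co_ab) dvdn1 => /eqP q1.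
by move: (allP S_pr q qS); rewrite q1.
Qed.

Lemma Phi_le_sieve_count S n : all prime S -> Phi n <= sieve_count S n.
Proof.
move=> S_pr; rewrite Phi_count_coprime.
apply: leq_sum => b _; apply: leq_sum => a _.
by case: (boolP (coprime a b)) => // /(sieved_coprime S_pr) ->.
Qed.

Definition primes_upto B := [seq p <- iota 0 B.+1 | prime p].

Lemma primes_upto_prime B : all prime (primes_upto B).
Proof. exact: filter_all. Qed.

Lemma primes_upto_uniq B : uniq (primes_upto B).
Proof. by rewrite filter_uniq // iota_uniq. Qed.

Lemma sieved_primes_upto_le B n a b : 0 < a <= n ->
  sieved (primes_upto B) a b <=
  coprime a b + \sum_(B.+1 <= q < n.+1) divides_both q a b.
Proof.
move=> /andP[a_gt0 a_le_n].
have [co_ab|nco_ab] := boolP (coprime a b); first by case: sieved.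
have g_gt1 : 1 < gcdn a b by rewrite ltn_neqAle eq_sym nco_ab gcdn_gt0 a_gt0.
set q := pdiv (gcdn a b).
have q_pr : prime q by exact: pdiv_prime.
have q_dvd_ab : divides_both q a b by rewrite /divides_both -dvdn_gcd pdiv_dvd.
have q_le_a : q <= a by case/andP: q_dvd_ab => q_dvd_a _; apply: dvdn_leq.
rewrite add0n; case: (leqP q B) => [q_le_B | B_lt_q].
  suff -> : sieved (primes_upto B) a b = false by [].
  apply/negbTE/allP => /(_ q); rewrite mem_filter q_pr mem_iota q_dvd_ab /=.
  by rewrite add0n ltnS q_le_B => /(_ isT).
rewrite (bigD1_seq (r := index_iota _ _) q) ?mem_index_iota ?iota_uniq //=; last by lia.
by rewrite q_dvd_ab; case: sieved.
Qed.

Lemma sieve_count_primes_upto_le B n :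
  sieve_count (primes_upto B) n <=
  Phi n + \sum_(B.+1 <= q < n.+1) count_pairs n (divides_both q).
Proof.
rewrite Phi_count_coprime /sieve_count /count_pairs exchange_big -big_split.
rewrite big_nat_cond [leqRHS]big_nat_cond; apply: leq_sum => b /andP[/andP[_ b_le_n] _].
rewrite exchange_big -big_split big_nat_cond [leqRHS]big_nat_cond.
apply: leq_sum => a /andP[a_range _]; apply: sieved_primes_upto_le; lia.
Qed.

Local Open Scope ring_scope.

Lemma count_all_pairs n :
  (count_pairs n (fun _ _ => true))%:R = n%:R * (n%:R + 1) / 2 :> rat.
Proof.
elim: n => [|n IHn]; first by rewrite /count_pairs big_geq ?mul0r.
rewrite /count_pairs big_nat_recr //= natrD -/(count_pairs n _) IHn.
by rewrite sum_nat_const_nat muln1 subn1 -[n.+1]addn1 natrD; field.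
Qed.

Definition sieve_density (S : seq nat) : rat := \prod_(q <- S) (1 - (q%:R ^+ 2)^-1).

Lemma sieve_density_ge0_le1 S : 0 <= sieve_density S <= 1.
Proof.
have inv_sqr_01 (q : nat) : 0 <= (q%:R ^+ 2 : rat)^-1 <= 1.
  case: q => [|q]; first by rewrite expr0n invr0 lexx ler01.
  by rewrite invr_ge0 exprn_ge0 //= invf_le1 ?exprn_gt0 // exprn_ege1 // ler1n.
have factor_01 q : 0 <= 1 - (q%:R ^+ 2 : rat)^-1 <= 1.
  by have /andP[? ?] := inv_sqr_01 q; apply/andP; split; lra.
apply/andP; split; first by apply: prodr_ge0 => q _; case/andP: (factor_01 q).
by apply: prodr_ile1 => q _; apply: factor_01.
Qed.

Lemma floor_div_sqr_gap n p : (0 < p)%N ->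
  0 <= (n%:R / p%:R : rat) ^+ 2 - (n %/ p)%:R ^+ 2 <= 2 * n%:R.
Proof.
move=> p_gt0; set x : rat := n%:R; set y : rat := (n %/ p)%:R; set P : rat := p%:R.
have P_ge1 : 1 <= P by rewrite ler1n.
have x_ge0 : 0 <= x by [].
have y_ge0 : 0 <= y by [].
have yP_le_x : y * P <= x by rewrite -natrM ler_nat leq_divM.
have x_lt_y1P : x < (y + 1) * P by rewrite /y natr1 -natrM ltr_nat ltn_ceil.
have y_le_z : y <= x / P by rewrite ler_pdivlMr //; lra.
have z_lt_y1 : x / P < y + 1 by rewrite ltr_pdivrMr //; lra.
have z_le_x : x / P <= x by rewrite ler_pdivrMr //; nra.
apply/andP; split; nra.
Qed.

Lemma sieve_count_approx S n : all prime S -> uniq S ->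
  `|(sieve_count S n)%:R - sieve_density S * n%:R ^+ 2 / 2| <= (3 ^ size S)%:R * n%:R.
Proof.
elim: S n => [|p S IHS] n /=.
  move=> _ _; rewrite /sieve_count count_all_pairs /sieve_density big_nil mul1r mul1r.
  have : 0 <= n%:R :> rat by [].
  by rewrite ler_distl => ?; apply/andP; split; lra.
move=> /andP[p_pr S_pr] /andP[pNS S_uniq].
have p_gt0 := prime_gt0 p_pr.
have count_cons : (sieve_count (p :: S) n)%:R =
    (sieve_count S n)%:R - (sieve_count S (n %/ p))%:R :> rat.
  by rewrite (sieve_count_cons n p_pr S_pr pNS) natrD addrK.
have density_cons : sieve_density (p :: S) * n%:R ^+ 2 / 2 =
    sieve_density S * n%:R ^+ 2 / 2 - sieve_density S * (n%:R / p%:R) ^+ 2 / 2.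
  by rewrite /sieve_density big_cons; field; rewrite pnatr_eq0 -lt0n.
rewrite count_cons density_cons expnS natrM.
have /andP[gap_ge0 gap_le] := floor_div_sqr_gap n p_gt0.
have := IHS n S_pr S_uniq; have := IHS (n %/ p)%N S_pr S_uniq.
have /andP[c_ge0 c_le1] := sieve_density_ge0_le1 S.
have y_le_x : (n %/ p)%:R <= n%:R :> rat by rewrite ler_nat leq_div.
set c := sieve_density S; set e : rat := (3 ^ size S)%:R.
set x : rat := n%:R; set y : rat := (n %/ p)%:R; set z := x / p%:R.
have e_ge1 : 1 <= e by rewrite ler1n expn_gt0.
have cgap_ge0 : 0 <= c * (z ^+ 2 - y ^+ 2) by rewrite mulr_ge0.
have cgap_le : c * (z ^+ 2 - y ^+ 2) <= 2 * x.
  by apply: le_trans gap_le; rewrite ler_piMl.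
have ey_le_ex : e * y <= e * x by rewrite ler_wpM2l // ler0n.
have x_le_ex : x <= e * x by rewrite ler_peMl.
(* The errors at n and at n %/ p and the rounding term add up to at most 3 e x. *)
rewrite !ler_distl => /andP[m_lo m_hi] /andP[n_lo n_hi]; apply/andP; split; lra.
Qed.

Lemma sum_inv_sqr_le B N : (0 < B)%N ->
  \sum_(B.+1 <= q < N) (q%:R ^+ 2 : rat)^-1 <= B%:R^-1.
Proof.
move=> B_gt0; rewrite big_add1.
have [B_le|N_lt] := leqP B N.-1; last by rewrite big_geq ?invr_ge0 // ltnW.
apply: (@le_trans _ _ (\sum_(B <= k < N.-1) (k%:R^-1 - k.+1%:R^-1))).
  apply: ler_sum_nat => k /andP[B_le_k _].
  have k_ge1 : 1 <= k%:R :> rat by rewrite ler1n; apply: leq_trans B_le_k.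
  have telescoping_gap : k%:R^-1 - k.+1%:R^-1 - (k.+1%:R ^+ 2)^-1 =
      (k%:R * k.+1%:R ^+ 2)^-1 :> rat.
    by rewrite -natr1; field; apply/andP; split; apply/eqP; lra.
  by rewrite -subr_ge0 telescoping_gap invr_ge0 mulr_ge0 ?exprn_ge0.
rewrite (@telescope_sumr_eq _ _ _ (fun k => - k%:R^-1)) //= => [|k _].
  by rewrite opprK addrC lerBlDr lerDl invr_ge0.
by rewrite opprK addrC.
Qed.

(* Writing m := n %/ q, the pairs are counted by m (m + 1) / 2; since
   (m - 50)^2 >= 0 gives m <= m^2 / 100 + 25, the linear term only costs a
   small multiple of m^2 plus a constant. *)
Lemma count_common_multiples_le n q : (0 < q)%N ->
  (count_pairs n (divides_both q))%:R <=
  101 / 200 * (n%:R / q%:R) ^+ 2 + 25 / 2 :> rat.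
Proof.
move=> q_gt0; have /andP[gap_ge0 _] := floor_div_sqr_gap n q_gt0.
rewrite (eq_count_pairs _ (Q := fun a b => divides_both q a b && true)); last first.
  by move=> a b; rewrite andbT.
rewrite (count_pairs_multiples n (fun _ _ => true) q_gt0) count_all_pairs.
move: gap_ge0; set m : rat := (n %/ q)%N%:R; set z := n%:R / q%:R => gap_ge0.
have : 0 <= (m - 50) ^+ 2 by apply: sqr_ge0.
lra.
Qed.

Lemma sum_common_multiples_le B n : (0 < B)%N ->
  (\sum_(B.+1 <= q < n.+1) count_pairs n (divides_both q))%:R <=
  101 / 200 * n%:R ^+ 2 / B%:R + 25 / 2 * n%:R :> rat.
Proof.
move=> B_gt0; rewrite natr_sum; set x : rat := n%:R.
apply: (@le_trans _ _ (\sum_(B.+1 <= q < n.+1) (101 / 200 * x ^+ 2 * (q%:R ^+ 2)^-1 + 25 / 2))).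
  apply: ler_sum_nat => q /andP[B_lt_q _].
  have -> : 101 / 200 * x ^+ 2 / q%:R ^+ 2 = 101 / 200 * (x / q%:R) ^+ 2.
    by rewrite exprMn exprVn [RHS]mulrA.
  by rewrite /x; apply: count_common_multiples_le; apply: leq_ltn_trans B_lt_q.
rewrite big_split /= -mulr_sumr sumr_const_nat; apply: lerD.
  have coef_ge0 : 0 <= 101 / 200 * x ^+ 2 :> rat.
    by apply: mulr_ge0; [lra | apply: exprn_ge0].
  exact: ler_wpM2l coef_ge0 _ _ (sum_inv_sqr_le n.+1 B_gt0).
have coef_ge0 : 0 <= 25 / 2 :> rat by lra.
rewrite -[_ *+ _]mulr_natr; apply: ler_wpM2l coef_ge0 _ _ _.
by rewrite ler_nat subSS leq_subr.
Qed.

Lemma primes_upto_200E : primes_upto 200 =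
  [:: 2; 3; 5; 7; 11; 13; 17; 19; 23; 29; 31; 37; 41; 43; 47; 53; 59; 61; 67; 71;
      73; 79; 83; 89; 97; 101; 103; 107; 109; 113; 127; 131; 137; 139; 149; 151;
      157; 163; 167; 173; 179; 181; 191; 193; 197; 199]%N.
Proof. by vm_compute. Qed.

Lemma sieve_density_primes_upto_200 :
  608 / 1000 <= sieve_density (primes_upto 200) <= 9 / 10.
Proof.
rewrite primes_upto_200E /sieve_density !big_cons big_nil.
by apply/andP; split; lra.
Qed.

(* Since c/2 - 101/80000 > 3/10 + 1/1000 and 9/20 = 1/2 - 1/20, the quadratic
   terms leave a slack of at least n^2/1000, which absorbs the linear errors
   (3^|S| + 25/2) n as soon as n >= 1000 (3^|S| + 13). *)
Lemma Phi_bounds_eventually : exists N, forall n, (N <= n)%N ->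
  3 / 10 * n%:R ^+ 2 < (Phi n)%:R :> rat /\ (Phi n)%:R < (n%:R ^+ 2 - n%:R) / 2 :> rat.
Proof.
have approx n := sieve_count_approx n (primes_upto_prime 200) (primes_upto_uniq 200).
have /andP[c_lo c_hi] := sieve_density_primes_upto_200.
move: (sieve_density _) (3 ^ size _)%N c_lo c_hi approx => c k c_lo c_hi approx.
exists (1000 * (k + 13))%N => n; rewrite -(ler_nat rat) natrM natrD => x_large.
have Phi_le : (Phi n)%:R <= (sieve_count (primes_upto 200) n)%:R :> rat.
  by rewrite ler_nat Phi_le_sieve_count ?primes_upto_prime.
have sieve_le : (sieve_count (primes_upto 200) n)%:R <=
    (Phi n)%:R + (\sum_(201 <= q < n.+1) count_pairs n (divides_both q))%:R :> rat.
  by rewrite -natrD ler_nat sieve_count_primes_upto_le.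
have tail_le := sum_common_multiples_le n (isT : (0 < 200)%N).
have := approx n; rewrite ler_distl => /andP[approx_lo approx_hi].
set x : rat := n%:R; set e : rat := k%:R.
have x_ge0 : 0 <= x := ler0n _ _.
have e_ge0 : 0 <= e := ler0n _ _.
have x2_large : 1000 * (e + 13) * x <= x ^+ 2.
  by rewrite expr2; exact: (@ler_wpM2r _ x x_ge0 _ _ x_large).
have cx2_lo := ler_wpM2r (sqr_ge0 x) c_lo.
have cx2_hi := ler_wpM2r (sqr_ge0 x) c_hi.
have ex_ge0 := mulr_ge0 e_ge0 x_ge0.
split; lra.
Qed.

Theorem theorem10 :
  (forall n : nat, (0 < n)%N -> sigmaI n = Phi n) /\
  approxF sigmaQ (fun n => alpha n ^+ 2) /\
  ltF (fun n => (3%:R / 10%:R) * alpha n ^+ 2) sigmaQ /\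
  ltF sigmaQ (fun n => (alpha n ^+ 2 - alpha n) / 2%:R).
Proof.
have [N Phi_bnds] := Phi_bounds_eventually.
have sigma_bnds n : (N <= n)%N ->
    3%:R / 10%:R * alpha n ^+ 2 < sigmaQ n /\ sigmaQ n < (alpha n ^+ 2 - alpha n) / 2%:R.
  by rewrite /sigmaQ /alpha sigmaI_Phi; exact: Phi_bnds.
split; first by move=> n _; exact: sigmaI_Phi.
split; last by split; exists N => n /sigma_bnds[].
have alpha_ge0 n : 0 <= alpha n := ler0n _ _.
split; [exists 4%N | exists 1%N]; split => //; exists N => n /sigma_bnds[lo hi].
  have := sqr_ge0 (alpha n); lra.
have := alpha_ge0 n; have := sqr_ge0 (alpha n); lra.
Qed.
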